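(* (i) There exists a set $A \subseteq \mathbb{N}$ that contains arithmetic progressions of every finite length but is not fractionally dense. (ii) There exists a set $A \subseteq \mathbb{N}$ that is fractionally dense but contains no arithmetic progression of length $3$ or more.
   Context: $\mathbb{N} = \{1,2,3,\ldots\}$. For $A \subseteq \mathbb{N}$, the quotient set is $R(A) = \{a/a' : a, a' \in A\}$, and $A$ is called fractionally dense if the closure of $R(A)$ in $\mathbb{R}$ equals $[0,\infty)$. An arithmetic progression of length $n$ in $A$ is a sequence $c, c+d, c+2d, \ldots, c+(n-1)d$ of elements of $A$ with $d \geq 1$ an integer. *)

From Stdlib Require Import Reals Lra Lia.
Open Scope R_scope.

(* Subsets of N = {1,2,3,...}: predicates on nat all of whose elements are >= 1. *)
Definition subset_posnat (A : nat -> Prop) : Prop := forall a, A a -> (1 <= a)%nat.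

Definition quotient_set (A : nat -> Prop) (r : R) : Prop :=
  exists a a', A a /\ A a' /\ r = INR a / INR a'.

Definition closure_R (S : R -> Prop) (x : R) : Prop :=
  forall eps, 0 < eps -> exists y, S y /\ Rabs (y - x) < eps.

Definition fractionally_dense (A : nat -> Prop) : Prop :=
  forall x : R, closure_R (quotient_set A) x <-> 0 <= x.

Definition has_AP (A : nat -> Prop) (n : nat) : Prop :=
  exists c d : nat, (1 <= d)%nat /\ forall i : nat, (i < n)%nat -> A (c + i * d)%nat.

(* (i) The union of the blocks [10^k, 2 10^k] contains runs of consecutive
   integers of every length, but a quotient of two of its elements is at most
   2 or at least 5, so 3 is not a limit of quotients.
   (ii) Enumerate all pairs (n, m) of positive integers and let the k-th block
   be {n M_k, m M_k} for the k-th pair, where M_k grows so fast that every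
   element of a block is less than half of every element of the next blocks.
   Each positive rational n/m is then a quotient.  In a 3-term progression
   a < b < c we have c < 2b, which forces b and c into a common block k; then
   a = 2b - c is a positive multiple of M_k, hence also in block k, but a block
   has at most two elements. *)

From Stdlib Require Import Reals Lra Lia Cantor ZArith.
Open Scope R_scope.

Lemma quotient_set_nonneg (A : nat -> Prop) (r : R) : quotient_set A r -> 0 <= r.
Proof.
  intros [a [a' [_ [_ ->]]]].
  unfold Rdiv; apply Rmult_le_pos; [apply pos_INR |].
  destruct a' as [| a'].
  - simpl; rewrite Rinv_0; lra.
  - left; apply Rinv_0_lt_compat, lt_0_INR; lia.
Qed.

Lemma exists_nat_between (y : R) : 0 <= y -> exists n : nat, y < INR n <= y + 1.
Proof.
  intros Hy. destruct (archimed y) as [Hup Hup1].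
  exists (Z.to_nat (up y)).
  rewrite INR_IZR_INZ, Z2Nat.id by (apply le_IZR; lra).
  lra.
Qed.

Lemma positive_fraction_approx (x eps : R) : 0 <= x -> 0 < eps ->
  exists n m : nat, (1 <= n)%nat /\ (1 <= m)%nat /\ Rabs (INR n / INR m - x) < eps.
Proof.
  intros Hx Heps.
  destruct (archimed_cor1 eps Heps) as [m [Hm Hm1]].
  assert (Hmpos : 0 < INR m) by (apply lt_0_INR; lia).
  destruct (exists_nat_between (x * INR m)) as [n [Hn Hn1]]; [nra |].
  assert (Hinv : 0 < / INR m) by (apply Rinv_0_lt_compat; lra).
  exists n, m. split; [| split; [lia |]].
  - destruct n; [simpl in Hn; nra | lia].
  - replace (INR n / INR m - x) with ((INR n - x * INR m) * / INR m) by (field; lra).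
    rewrite Rabs_right by nra.
    nra.
Qed.

Lemma fractionally_dense_of_positive_fractions (A : nat -> Prop) :
  (forall n m : nat, (1 <= n)%nat -> (1 <= m)%nat -> quotient_set A (INR n / INR m)) ->
  fractionally_dense A.
Proof.
  intros Hfrac x; split.
  - intros Hcl. destruct (Rle_or_lt 0 x) as [Hx | Hx]; [exact Hx |].
    destruct (Hcl (- x)) as [y [Hy Hyx]]; [lra |].
    pose proof (quotient_set_nonneg A y Hy). apply Rabs_def2 in Hyx. lra.
  - intros Hx eps Heps.
    destruct (positive_fraction_approx x eps Hx Heps) as [n [m [Hn [Hm Happrox]]]].
    exists (INR n / INR m). auto.
Qed.

Lemma not_fractionally_dense_of_quotient_gap (A : nat -> Prop) (p q : R) :
  0 <= p < q ->
  (forall a b, A a -> A b -> INR a / INR b <= p \/ q <= INR a / INR b) ->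
  ~ fractionally_dense A.
Proof.
  intros Hpq Hgap Hdense.
  destruct (proj2 (Hdense ((p + q) / 2)) ltac:(lra) ((q - p) / 2)) as [y [Hy Hyx]]; [lra |].
  destruct Hy as [a [b [Ha [Hb ->]]]].
  apply Rabs_def2 in Hyx. destruct (Hgap a b Ha Hb); lra.
Qed.

Lemma has_AP_of_consecutive (A : nat -> Prop) (n c : nat) :
  (forall i, (i < n)%nat -> A (c + i)%nat) -> has_AP A n.
Proof.
  intros Hrun. exists c, 1%nat. split; [lia |].
  intros i Hi. rewrite Nat.mul_1_r. auto.
Qed.

Lemma not_has_AP_of_no_3AP (A : nat -> Prop) (n : nat) :
  (forall a b c, A a -> A b -> A c -> (a < b < c)%nat -> (a + c <> 2 * b)%nat) ->
  (3 <= n)%nat -> ~ has_AP A n.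
Proof.
  intros Hno3 Hn [c [d [Hd HAP]]].
  apply (Hno3 (c + 0 * d) (c + 1 * d) (c + 2 * d))%nat; try (apply HAP); lia.
Qed.

Definition decade_blocks (a : nat) : Prop := exists k, (10 ^ k <= a <= 2 * 10 ^ k)%nat.

Lemma decade_blocks_pos : subset_posnat decade_blocks.
Proof. intros a [k Hk]. pose proof (Nat.pow_nonzero 10 k). lia. Qed.

Lemma decade_blocks_gap (a b : nat) :
  decade_blocks a -> decade_blocks b -> (a <= 2 * b \/ 5 * b <= a)%nat.
Proof.
  intros [k Hk] [j Hj].
  destruct (le_lt_dec k j) as [Hkj | Hjk].
  - left. pose proof (Nat.pow_le_mono_r 10 k j ltac:(lia) Hkj). lia.
  - right. pose proof (Nat.pow_le_mono_r 10 (S j) k ltac:(lia) Hjk). simpl in *. lia.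
Qed.

Lemma decade_blocks_quotient_gap (a b : nat) : decade_blocks a -> decade_blocks b ->
  INR a / INR b <= 2 \/ 5 <= INR a / INR b.
Proof.
  intros Ha Hb.
  assert (Hbpos : 0 < INR b) by (apply lt_0_INR, decade_blocks_pos, Hb).
  assert (Ha_eq : INR a = INR a / INR b * INR b) by (field; lra).
  destruct (decade_blocks_gap a b Ha Hb) as [Hgap | Hgap]; apply le_INR in Hgap;
    rewrite mult_INR in Hgap; simpl in Hgap; [left | right]; nra.
Qed.

Lemma decade_blocks_has_AP (n : nat) : has_AP decade_blocks n.
Proof.
  apply (has_AP_of_consecutive _ n (10 ^ n)).
  intros i Hi. exists n. pose proof (Nat.pow_gt_lin_r 10 n). lia.
Qed.

Lemma long_APs_not_fractionally_dense : exists A : nat -> Prop,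
  subset_posnat A /\ (forall n : nat, has_AP A n) /\ ~ fractionally_dense A.
Proof.
  exists decade_blocks. split; [| split].
  - exact decade_blocks_pos.
  - exact decade_blocks_has_AP.
  - apply (not_fractionally_dense_of_quotient_gap _ 2 5); [lra |].
    exact decade_blocks_quotient_gap.
Qed.

Definition scale (k : nat) : nat := 4 ^ (k * k).

(* Block [k] is {n M_k, m M_k}, where (n - 1, m - 1) is the k-th pair in
   Cantor's enumeration of [nat * nat]. *)
Definition in_block (k a : nat) : Prop :=
  exists u, (u = fst (of_nat k) + 1 \/ u = snd (of_nat k) + 1)%nat /\ a = (u * scale k)%nat.

Definition pair_blocks (a : nat) : Prop := exists k, in_block k a.

Lemma scale_pos (k : nat) : (1 <= scale k)%nat.
Proof. unfold scale. pose proof (Nat.pow_nonzero 4 (k * k)). lia. Qed.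

Lemma scale_le_mono (k j : nat) : (k <= j)%nat -> (scale k <= scale j)%nat.
Proof. intros Hkj. apply Nat.pow_le_mono_r; [lia | nia]. Qed.

Lemma scale_succ (k : nat) : (2 * (k + 1) * scale k < scale (S k))%nat.
Proof.
  unfold scale. replace (S k * S k)%nat with (k * k + (2 * k + 1))%nat by lia.
  rewrite Nat.pow_add_r.
  assert (Hgrowth : (2 * (k + 1) < 4 ^ (2 * k + 1))%nat).
  { rewrite Nat.pow_add_r, Nat.pow_mul_r. pose proof (Nat.pow_gt_lin_r 16 k). simpl. lia. }
  pose proof (Nat.pow_nonzero 4 (k * k)). nia.
Qed.

Lemma block_factor_bound (k u : nat) :
  (u = fst (of_nat k) + 1 \/ u = snd (of_nat k) + 1)%nat -> (1 <= u <= k + 1)%nat.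
Proof.
  intros Hu. pose proof (cancel_to_of k) as Hk.
  destruct (of_nat k) as [x y]. pose proof (to_nat_non_decreasing x y). simpl in Hu. lia.
Qed.

Lemma in_block_ge (k a : nat) : in_block k a -> (scale k <= a)%nat.
Proof. intros [u [Hu ->]]. apply block_factor_bound in Hu. nia. Qed.

Lemma in_block_lt_half (k j a : nat) : (k < j)%nat -> in_block k a -> (2 * a < scale j)%nat.
Proof.
  intros Hkj [u [Hu ->]]. apply block_factor_bound in Hu.
  pose proof (scale_succ k). pose proof (scale_le_mono (S k) j Hkj).
  assert (u * scale k <= (k + 1) * scale k)%nat by (apply Nat.mul_le_mono_r; lia).
  lia.
Qed.

Lemma in_block_index_mono (k j a b : nat) :
  in_block k a -> in_block j b -> (a <= b)%nat -> (k <= j)%nat.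
Proof.
  intros Ha Hb Hab. destruct (le_lt_dec k j) as [Hkj | Hjk]; [exact Hkj |].
  pose proof (in_block_lt_half j k b Hjk Hb). pose proof (in_block_ge k a Ha). lia.
Qed.

Lemma in_block_divide (k a : nat) : in_block k a -> Nat.divide (scale k) a.
Proof. intros [u [_ ->]]. exists u. reflexivity. Qed.

Lemma in_block_at_most_two (k a b c : nat) :
  in_block k a -> in_block k b -> in_block k c -> ~ (a < b < c)%nat.
Proof.
  intros [u [Hu ->]] [v [Hv ->]] [w [Hw ->]].
  destruct Hu as [-> | ->], Hv as [-> | ->], Hw as [-> | ->]; lia.
Qed.

Lemma pair_blocks_no_3AP (a b c : nat) :
  pair_blocks a -> pair_blocks b -> pair_blocks c -> (a < b < c)%nat -> (a + c <> 2 * b)%nat.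
Proof.
  intros [i Ha] [j Hb] [k Hc] Habc Hsum.
  pose proof (in_block_index_mono i j a b Ha Hb ltac:(lia)) as Hij.
  pose proof (in_block_index_mono j k b c Hb Hc ltac:(lia)) as Hjk.
  assert (Hjk_eq : j = k).
  { destruct (Nat.eq_dec j k) as [E | Hjk_ne]; [exact E |].
    pose proof (in_block_lt_half j k b ltac:(lia) Hb). pose proof (in_block_ge k c Hc). lia. }
  subst k.
  destruct (Nat.eq_dec i j) as [-> | Hij_ne].
  - exact (in_block_at_most_two j a b c Ha Hb Hc Habc).
  - assert (Hdiv : Nat.divide (scale j) a).
    { replace a with (2 * b - c)%nat by lia.
      apply Nat.divide_sub_r;
        [apply Nat.divide_mul_r, in_block_divide, Hb | apply in_block_divide, Hc]. }
    assert (Hapos : (0 < a)%nat) by (pose proof (in_block_ge i a Ha); pose proof (scale_pos i); lia).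
    pose proof (Nat.divide_pos_le (scale j) a Hapos Hdiv).
    pose proof (in_block_lt_half i j a ltac:(lia) Ha). lia.
Qed.

Lemma pair_blocks_pos : subset_posnat pair_blocks.
Proof. intros a [k Ha]. pose proof (in_block_ge k a Ha). pose proof (scale_pos k). lia. Qed.

Lemma pair_blocks_fractionally_dense : fractionally_dense pair_blocks.
Proof.
  apply fractionally_dense_of_positive_fractions. intros n m Hn Hm.
  set (k := to_nat (n - 1, m - 1)%nat).
  assert (Hk : of_nat k = (n - 1, m - 1)%nat) by apply cancel_of_to.
  exists (n * scale k)%nat, (m * scale k)%nat. split; [| split].
  - exists k, n. rewrite Hk. simpl. split; [left | reflexivity]; lia.
  - exists k, m. rewrite Hk. simpl. split; [right | reflexivity]; lia.
  - assert (Hscale : 0 < INR (scale k)) by (apply lt_0_INR; pose proof (scale_pos k); lia).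
    assert (Hmpos : 0 < INR m) by (apply lt_0_INR; lia).
    rewrite !mult_INR. field. lra.
Qed.

Lemma fractionally_dense_no_3APs : exists A : nat -> Prop,
  subset_posnat A /\ fractionally_dense A /\ (forall n : nat, (3 <= n)%nat -> ~ has_AP A n).
Proof.
  exists pair_blocks. split; [| split].
  - exact pair_blocks_pos.
  - exact pair_blocks_fractionally_dense.
  - intros n. apply not_has_AP_of_no_3AP, pair_blocks_no_3AP.
Qed.

Theorem mainTheorem4 :
  (exists A : nat -> Prop,
     subset_posnat A /\ (forall n : nat, has_AP A n) /\ ~ fractionally_dense A) /\
  (exists A : nat -> Prop,
     subset_posnat A /\ fractionally_dense A /\ (forall n : nat, (3 <= n)%nat -> ~ has_AP A n)).
Proof. split; [exact long_APs_not_fractionally_dense | exact fractionally_dense_no_3APs]. Qed.
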